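(* For any Hermitian matrices $P$ and $Q$ of the same size, $$|\mathrm{Tr}(\zeta(P+Q)-\zeta(P))|\le2\big(\|P\|_2\|Q\|_2+\|Q\|_2^2\big).$$
   Context: $\zeta:\mathbb{R}\to\mathbb{R}$ is $\zeta(x)=x^2$ for $x\le0$ and $\zeta(x)=0$ otherwise, applied to Hermitian matrices via the spectral decomposition. $\|\cdot\|_2$ is the (unnormalized) Schatten 2-norm (Frobenius norm). *)

From HB Require Import structures.
From mathcomp Require Import all_boot all_order all_algebra.
From mathcomp Require Import sesquilinear spectral.
Set Implicit Arguments. Unset Strict Implicit. Unset Printing Implicit Defensive.
Import Order.TTheory GRing.Theory Num.Theory.
Local Open Scope ring_scope.

(* On a numClosedFieldType the
   order is partial; on real arguments (the only ones used: eigenvalues of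
   Hermitian matrices) this is exactly the paper's zeta. *)
Definition zeta {C : numClosedFieldType} (x : C) : C :=
  if x <= 0 then x ^+ 2 else 0.

Definition mxfun {C : numClosedFieldType} (f : C -> C) n (A : 'M[C]_n) : 'M[C]_n :=
  invmx (spectralmx A) *m diag_mx (map_mx f (spectral_diag A)) *m spectralmx A.

(* unnormalized Schatten 2-norm (Frobenius norm) *)
Definition frob {C : numClosedFieldType} m n (A : 'M[C]_(m, n)) : C :=
  sqrtC (\sum_(i < m) \sum_(j < n) `|A i j| ^+ 2).

From HB Require Import structures.
From mathcomp Require Import all_boot all_order all_algebra.
From mathcomp Require Import sesquilinear spectral.
From mathcomp Require Import ring.
Import Order.TTheory GRing.Theory Num.Theory.

(* Tr zeta(X) is the squared Frobenius distance from a Hermitian X to the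
   cone of positive semidefinite matrices: in the eigenbasis of X every such
   matrix has a nonnegative diagonal, so the distance is at least that of the
   eigenvalues of X to [0, +oo), and the positive part of X attains it.
   Hence sqrt (Tr zeta) is 1-Lipschitz for the Frobenius norm and vanishes on
   the cone, so with a = sqrt (Tr zeta(P)) and b = sqrt (Tr zeta(P + Q)),
   |b^2 - a^2| = |b - a| (b + a) <= |Q|_2 (2 |P|_2 + |Q|_2). *)

Set Implicit Arguments.
Unset Strict Implicit.
Unset Printing Implicit Defensive.

Local Open Scope ring_scope.
Local Open Scope sesquilinear_scope.

Lemma ler_dist_sqr (R : numDomainType) (a b p q : R) :
  0 <= a -> 0 <= b -> a <= p -> a <= b + q -> b <= a + q ->
  `|b ^+ 2 - a ^+ 2| <= 2 * (p * q + q ^+ 2).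
Proof.
move=> a0 b0 ap abq baq.
have dist_ba : `|b - a| <= q.
  by rewrite real_ler_distl ?rpredB ?ger0_real // lerBlDr abq baq.
have q0 : 0 <= q := le_trans (normr_ge0 _) dist_ba.
have ba_le : b + a <= p + p + q by rewrite addrAC lerD // (le_trans baq) ?lerD.
rewrite subr_sqr normrM (ger0_norm (addr_ge0 b0 a0)).
apply: le_trans (ler_pM (normr_ge0 _) (addr_ge0 b0 a0) dist_ba ba_le) _.
have -> : 2 * (p * q + q ^+ 2) = q * (p + p + q) + q ^+ 2 by ring.
by rewrite lerDl exprn_ge0.
Qed.

Section Frobenius.
Variable C : numClosedFieldType.

Lemma frob_dotmx m n (A : 'M[C]_(m, n)) :
  frob A = sqrtC (dotmx (mxvec A) (mxvec A)).
Proof.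
rewrite /frob dotmxE mxE pair_big /= (reindex _ (@curry_mxvec_bij m n)) /=.
by congr sqrtC; apply: eq_bigr => -[i j] _; rewrite !mxE mxvecE normCK.
Qed.

Lemma frob_ge0 m n (A : 'M[C]_(m, n)) : 0 <= frob A.
Proof. by rewrite frob_dotmx sqrtC_ge0 dnorm_ge0. Qed.

Lemma frobD_le m n (A B : 'M[C]_(m, n)) : frob (A + B) <= frob A + frob B.
Proof.
by rewrite !frob_dotmx linearD; exact: (triangle_lerif (@dotmx C _)).
Qed.

Lemma frobN m n (A : 'M[C]_(m, n)) : frob (- A) = frob A.
Proof. by rewrite !frob_dotmx linearN /= hnormN. Qed.

Lemma frob_sqr m n (A : 'M[C]_(m, n)) :
  frob A ^+ 2 = \sum_i \sum_j `|A i j| ^+ 2.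
Proof. exact: sqrtCK. Qed.

Lemma frob_sqr_mxtrace m n (A : 'M[C]_(m, n)) :
  frob A ^+ 2 = \tr (A *m A ^t*).
Proof.
rewrite frob_sqr; apply: eq_bigr => i _; rewrite mxE.
by apply: eq_bigr => j _; rewrite !mxE normCK.
Qed.

Lemma frob_unitary_conj n (U A : 'M[C]_n) :
  U \is unitarymx -> frob (U ^t* *m A *m U) = frob A.
Proof.
move=> uU; apply/eqP; rewrite -(eqrXn2 (ltn0Sn 1)) ?frob_ge0 //.
rewrite !frob_sqr_mxtrace !trmx_mul !map_mxM trmxCK !mulmxA mulmxtVK //.
by rewrite -!mulmxA mxtrace_mulC !mulmxA mulmxtVK.
Qed.

Lemma sum_diag_le_frob_sqr n (A : 'M[C]_n) :
  \sum_i `|A i i| ^+ 2 <= frob A ^+ 2.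
Proof.
rewrite frob_sqr; apply: ler_sum => i _.
by rewrite (bigD1 i) //= lerDl sumr_ge0 // => j _; rewrite exprn_ge0.
Qed.

Lemma frob_diag_mx n (d : 'rV[C]_n) :
  frob (diag_mx d) ^+ 2 = \sum_i `|d 0 i| ^+ 2.
Proof.
rewrite frob_sqr; apply: eq_bigr => i _.
rewrite (bigD1 i) //= big1 ?addr0 => [|j /negPf ji]; first by rewrite mxE eqxx.
by rewrite mxE eq_sym ji mulr0n normr0 expr0n.
Qed.

End Frobenius.

Section Hermitian.
Variables (C : numClosedFieldType) (n : nat).
Implicit Types (X Y : 'M[C]_n).

Lemma hermsymmxD X Y :
  X \is hermsymmx -> Y \is hermsymmx -> X + Y \is hermsymmx.
Proof.
rewrite !is_hermitianmxE !expr0 !scale1r => /eqP hX /eqP hY.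
by rewrite linearD /= map_mxD -hX -hY.
Qed.

Lemma hermitian_spectralE X : X \is hermsymmx ->
  X = (spectralmx X) ^t* *m diag_mx (spectral_diag X) *m spectralmx X.
Proof.
move=> /hermitian_normalmx /orthomx_spectralP {1}->.
by rewrite invmx_unitary // spectral_unitarymx.
Qed.

Lemma hermitian_spectral_real X i :
  X \is hermsymmx -> spectral_diag X 0 i \is Num.real.
Proof. by move=> /hermitian_spectral_diag_real /mxOverP; apply. Qed.

Lemma mxtrace_mxfun (f : C -> C) X :
  \tr (mxfun f X) = \sum_i f (spectral_diag X 0 i).
Proof.
rewrite /mxfun mxtrace_mulC mulmxA mulmxV ?spectral_unit // mul1mx mxtrace_diag.
by apply: eq_bigr => i _; rewrite mxE.
Qed.

Definition psdmx Y : Prop := exists V (c : 'rV[C]_n),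
  [/\ V \is unitarymx, forall i, 0 <= c 0 i & Y = V ^t* *m diag_mx c *m V].

Lemma psdmx0 : psdmx 0.
Proof.
exists 1%:M, 0; split.
- by apply/unitarymxP; rewrite trmx1 map_mx1 mulmx1.
- by move=> i; rewrite mxE.
- by rewrite raddf0 mulmx0 mul0mx.
Qed.

End Hermitian.

Lemma zeta_le_sqr_dist (C : numClosedFieldType) (x w : C) :
  x \is Num.real -> 0 <= w -> zeta x <= `|x - w| ^+ 2.
Proof.
move=> xR w0; rewrite /zeta; case: ifP => x0; last exact: exprn_ge0.
rewrite -real_normK //; apply: lerXn2r; rewrite ?nnegrE //.
by rewrite !ler0_norm ?lerN2 ?lerBlDr ?lerDl // add0r (le_trans x0).
Qed.

Section TraceZeta.
Variables (C : numClosedFieldType) (n : nat).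
Implicit Types (X Y Z : 'M[C]_n).

Lemma conj_diag_mx_diag_ge0 p (M : 'M[C]_(p, n)) (c : 'rV[C]_p) i :
  (forall k, 0 <= c 0 k) -> 0 <= (M ^t* *m diag_mx c *m M) i i.
Proof.
move=> c0; rewrite mul_mx_diag mxE sumr_ge0 // => k _.
by rewrite !mxE mulrAC -normCKC mulr_ge0 ?exprn_ge0.
Qed.

Lemma sum_zeta_le_frob_diag_mxB (d : 'rV[C]_n) (W : 'M[C]_n) :
  (forall i, d 0 i \is Num.real) -> (forall i, 0 <= W i i) ->
  \sum_i zeta (d 0 i) <= frob (diag_mx d - W) ^+ 2.
Proof.
move=> dR W0; apply: le_trans _ (sum_diag_le_frob_sqr _).
by apply: ler_sum => i _; rewrite !mxE eqxx mulr1n zeta_le_sqr_dist.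
Qed.

Lemma trzeta_le_frob_psd X Y : X \is hermsymmx -> psdmx Y ->
  \tr (mxfun zeta X) <= frob (X - Y) ^+ 2.
Proof.
move=> hX [V [c [uV c0 ->]]]; set U := spectralmx X; set M := V *m U ^t*.
have uU : U \is unitarymx by exact: spectral_unitarymx.
have -> : X - V ^t* *m diag_mx c *m V =
          U ^t* *m (diag_mx (spectral_diag X) - M ^t* *m diag_mx c *m M) *m U.
  rewrite {1}(hermitian_spectralE hX) -/U mulmxBr mulmxBl.
  have UtU : U ^t* *m U = 1%:M by rewrite -[U ^t*]mul1mx mulmxKtV.
  by rewrite !trmx_mul !map_mxM trmxCK !mulmxA UtU mul1mx mulmxKtV.
rewrite mxtrace_mxfun frob_unitary_conj //.
apply: sum_zeta_le_frob_diag_mxB => i; first exact: hermitian_spectral_real.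
exact: conj_diag_mx_diag_ge0.
Qed.

Lemma trzeta_attained X : X \is hermsymmx ->
  exists2 Y, psdmx Y & \tr (mxfun zeta X) = frob (X - Y) ^+ 2.
Proof.
move=> hX; set U := spectralmx X; set d := spectral_diag X.
have dR i : d 0 i \is Num.real by exact: hermitian_spectral_real.
pose c := \row_i (if d 0 i <= 0 then 0 else d 0 i).
exists (U ^t* *m diag_mx c *m U).
  exists U, c; split => [|i|//]; first exact: spectral_unitarymx.
  by rewrite mxE; case: ifPn => //; rewrite -real_ltNge ?real0 // => /ltW.
rewrite [in RHS](hermitian_spectralE hX) -/U -/d -mulmxBl -mulmxBr -raddfB /=.
rewrite frob_unitary_conj ?spectral_unitarymx // frob_diag_mx mxtrace_mxfun.
apply: eq_bigr => i _; rewrite /zeta !mxE; case: ifP => _.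
  by rewrite subr0 real_normK.
by rewrite subrr normr0 expr0n.
Qed.

Lemma trzeta_ge0 X : X \is hermsymmx -> 0 <= \tr (mxfun zeta X).
Proof. by move=> /trzeta_attained [Y _ ->]; rewrite exprn_ge0 ?frob_ge0. Qed.

Lemma sqrt_trzeta_le_frob_psd X Y : X \is hermsymmx -> psdmx Y ->
  sqrtC (\tr (mxfun zeta X)) <= frob (X - Y).
Proof.
move=> hX psdY.
rewrite -(sqrCK (frob_ge0 (X - Y))) ler_sqrtC ?nnegrE.
- exact: trzeta_le_frob_psd.
- exact: trzeta_ge0.
- by rewrite exprn_ge0 ?frob_ge0.
Qed.

Lemma sqrt_trzeta_lipschitz X Z : X \is hermsymmx -> Z \is hermsymmx ->
  sqrtC (\tr (mxfun zeta X)) <= sqrtC (\tr (mxfun zeta Z)) + frob (X - Z).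
Proof.
move=> hX /trzeta_attained [Y psdY ->]; rewrite sqrCK ?frob_ge0 // addrC.
apply: le_trans (sqrt_trzeta_le_frob_psd hX psdY) _.
have -> : X - Y = (X - Z) + (Z - Y) by rewrite addrA subrK.
exact: frobD_le.
Qed.

End TraceZeta.

Theorem lemma10p4 (C : numClosedFieldType) (n : nat) (P Q : 'M[C]_n)
  (hP : P \is hermsymmx) (hQ : Q \is hermsymmx) :
  `| \tr (mxfun zeta (P + Q) - mxfun zeta P) |
    <= 2 * (frob P * frob Q + frob Q ^+ 2).
Proof.
have hPQ := hermsymmxD hP hQ.
rewrite raddfB /= -[\tr (mxfun zeta P)]sqrtCK -[\tr (mxfun zeta (P + Q))]sqrtCK.
apply: ler_dist_sqr; rewrite ?sqrtC_ge0 ?trzeta_ge0 //.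
- by rewrite -[P in frob P]subr0; exact: sqrt_trzeta_le_frob_psd (psdmx0 C n).
- have := sqrt_trzeta_lipschitz hP hPQ.
  by rewrite opprD addrA subrr add0r frobN.
- by have := sqrt_trzeta_lipschitz hPQ hP; rewrite addrAC subrr add0r.
Qed.
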